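(* Let $i:M\to N$ be a normal monomorphism of algebraic lattices (identify $M$ with $i(M)$) and $L$ an algebraic sub-lattice of $M$ with maximal element $1_L$. Let $\pi:M\to M/L$ and $\pi':N\to N/L$ be the maps $x\mapsto x\vee 1_L$, where $M/L=\{x\in M:x\ge1_L\}$ and $N/L=\{x\in N:x\ge 1_L\}$. Then $\pi,\pi'$ are normal epimorphisms, the induced map $i':M/L\to N/L$, $x\mapsto i(x)$, is a normal monomorphism, and the square with top $i$, left $\pi$, right $\pi'$, bottom $i'$ is both a pullback and a pushout in the category $\mathcal{L}$ of algebraic lattices.
   Context: An element $x$ of a complete lattice is compact if every cover $x\le\bigvee_{i\in I}y_i$ has a finite subcover. An algebraic lattice is a complete lattice in which every element is a join of compact elements. Morphisms in $\mathcal{L}$ preserve arbitrary joins and send compact elements to compact elements. A morphism $f:L_1\to L_2$ is a normal monomorphism if injective with downward closed image, and a normal epimorphism if there is $x_0\in L_1$ and an isomorphism $\varphi:\{y\in L_1:y\ge x_0\}\to L_2$ with $f(y)=\varphi(y\vee x_0)$. An algebraic sub-lattice of $M$ is a subset which is itself an algebraic lattice such that the inclusion is a normal monomorphism. *)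

From Stdlib Require Import List.

Definition is_partial_order {T : Type} (le : T -> T -> Prop) : Prop :=
  (forall x, le x x) /\
  (forall x y z, le x y -> le y z -> le x z) /\
  (forall x y, le x y -> le y x -> x = y).

Definition is_lub {T : Type} (le : T -> T -> Prop) (A : T -> Prop) (s : T) : Prop :=
  (forall a, A a -> le a s) /\ (forall u, (forall a, A a -> le a u) -> le s u).

Definition is_complete_lattice {T : Type} (le : T -> T -> Prop) : Prop :=
  is_partial_order le /\ forall A : T -> Prop, exists s, is_lub le A s.

Definition compact {T : Type} (le : T -> T -> Prop) (x : T) : Prop :=
  forall (A : T -> Prop) (s : T), is_lub le A s -> le x s ->
    exists l : list T, (forall y, In y l -> A y) /\
      (forall s', is_lub le (fun y => In y l) s' -> le x s').

Definition is_algebraic_lattice {T : Type} (le : T -> T -> Prop) : Prop :=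
  is_complete_lattice le /\
  forall x, exists A : T -> Prop, (forall c, A c -> compact le c) /\ is_lub le A x.

Definition is_mor {T1 T2 : Type} (le1 : T1 -> T1 -> Prop) (le2 : T2 -> T2 -> Prop)
  (f : T1 -> T2) : Prop :=
  (forall (A : T1 -> Prop) s, is_lub le1 A s ->
     is_lub le2 (fun y => exists x, A x /\ y = f x) (f s)) /\
  (forall x, compact le1 x -> compact le2 (f x)).

Definition is_normal_mono {T1 T2 : Type} (le1 : T1 -> T1 -> Prop) (le2 : T2 -> T2 -> Prop)
  (f : T1 -> T2) : Prop :=
  is_mor le1 le2 f /\
  (forall x y, f x = f y -> x = y) /\
  (forall x y, le2 y (f x) -> exists z, f z = y).

(* normal epimorphism: a morphism f for which there are x0 and an (order)
   isomorphism phi : {y | y >= x0} -> L2 with f y = phi (y \/ x0).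
   phi is given as a function on T1 whose restriction to {y | le1 x0 y}
   is an order isomorphism onto T2. *)
Definition is_normal_epi {T1 T2 : Type} (le1 : T1 -> T1 -> Prop) (le2 : T2 -> T2 -> Prop)
  (f : T1 -> T2) : Prop :=
  is_mor le1 le2 f /\
  exists (x0 : T1) (phi : T1 -> T2),
    (forall y y', le1 x0 y -> le1 x0 y' -> (le1 y y' <-> le2 (phi y) (phi y'))) /\
    (forall z, exists y, le1 x0 y /\ phi y = z) /\
    (forall y j, is_lub le1 (fun a => a = y \/ a = x0) j -> f y = phi j).

Definition sub_le {T : Type} (le : T -> T -> Prop) (S : T -> Prop) :
  {x : T | S x} -> {x : T | S x} -> Prop :=
  fun x y => le (proj1_sig x) (proj1_sig y).

Definition is_alg_sublattice {T : Type} (le : T -> T -> Prop) (S : T -> Prop) : Prop :=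
  is_algebraic_lattice (sub_le le S) /\
  is_normal_mono (sub_le le S) le (@proj1_sig T S).

(* Commutative square in L
        A --ftop--> B
        |           |
      fleft      fright
        v           v
        C --fbot--> D                                                     *)

Definition is_pullback {A B C D : Type}
  (leA : A -> A -> Prop) (leB : B -> B -> Prop) (leC : C -> C -> Prop) (leD : D -> D -> Prop)
  (ftop : A -> B) (fleft : A -> C) (fright : B -> D) (fbot : C -> D) : Prop :=
  (forall x, fright (ftop x) = fbot (fleft x)) /\
  forall (P : Type) (leP : P -> P -> Prop), is_algebraic_lattice leP ->
  forall (a : P -> B) (b : P -> C), is_mor leP leB a -> is_mor leP leC b ->
  (forall p, fright (a p) = fbot (b p)) ->
  exists u : P -> A, is_mor leP leA u /\
    (forall p, ftop (u p) = a p) /\ (forall p, fleft (u p) = b p) /\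
    (forall v : P -> A, is_mor leP leA v ->
       (forall p, ftop (v p) = a p) -> (forall p, fleft (v p) = b p) ->
       forall p, v p = u p).

Definition is_pushout {A B C D : Type}
  (leA : A -> A -> Prop) (leB : B -> B -> Prop) (leC : C -> C -> Prop) (leD : D -> D -> Prop)
  (ftop : A -> B) (fleft : A -> C) (fright : B -> D) (fbot : C -> D) : Prop :=
  (forall x, fright (ftop x) = fbot (fleft x)) /\
  forall (Q : Type) (leQ : Q -> Q -> Prop), is_algebraic_lattice leQ ->
  forall (g : B -> Q) (h : C -> Q), is_mor leB leQ g -> is_mor leC leQ h ->
  (forall x, g (ftop x) = h (fleft x)) ->
  exists u : D -> Q, is_mor leD leQ u /\
    (forall y, u (fright y) = g y) /\ (forall c, u (fbot c) = h c) /\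
    (forall v : D -> Q, is_mor leD leQ v ->
       (forall y, v (fright y) = g y) -> (forall c, v (fbot c) = h c) ->
       forall d, v d = u d).

(* Quotienting by [L] means passing to the principal filter above e := 1_L, with
   x |-> x \/ e as quotient map. Joins in the filter are ambient joins with e
   adjoined, and its compact elements are exactly e \/ c with c a finite join of
   compacts; hence the filter is algebraic and x |-> x \/ e is a normal epimorphism.
   Pullback: if a : P -> N and b : P -> M/L agree in N/L, then
   a p <= a p \/ i e = i (b p), so a factors through the downward closed image of i.
   Pushout: if g : N -> Q and h : M/L -> Q agree on M, then g (i e) = h e is the
   image of an empty join, the bottom of Q, so g is its own restriction to N/L
   composed with y |-> y \/ i e. *)

From Stdlib Require Import List ProofIrrelevance IndefiniteDescription.
Set Implicit Arguments.

Lemma sig_eq T (P : T -> Prop) (x y : {z | P z}) : proj1_sig x = proj1_sig y -> x = y.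
Proof. apply eq_sig_hprop; intros; apply proof_irrelevance. Qed.

Section Joins.

Variables (T : Type) (le : T -> T -> Prop).

Lemma lub_unique : is_partial_order le ->
  forall A s s', is_lub le A s -> is_lub le A s' -> s = s'.
Proof.
  intros [_ [_ Hanti]] A s s' [Hs_ub Hs_least] [Hs'_ub Hs'_least].
  apply Hanti; [apply Hs_least | apply Hs'_least]; assumption.
Qed.

Lemma lub_ext (A B : T -> Prop) s :
  (forall x, A x <-> B x) -> is_lub le A s -> is_lub le B s.
Proof.
  intros HAB [Hub Hleast]; split.
  - intros a Ha; apply Hub, HAB, Ha.
  - intros u Hu; apply Hleast; intros a Ha; apply Hu, HAB, Ha.
Qed.

Lemma lub_of_greatest (A : T -> Prop) s :
  A s -> (forall a, A a -> le a s) -> is_lub le A s.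
Proof. intros Hs Hub; split; [exact Hub | intros u Hu; apply Hu, Hs]. Qed.

Lemma lub_pair_le x y :
  is_partial_order le -> le x y -> is_lub le (fun a => a = x \/ a = y) y.
Proof.
  intros Hpo Hxy; apply lub_of_greatest; [right; reflexivity |].
  intros a [-> | ->]; [exact Hxy | apply Hpo].
Qed.

Lemma compact_of_finite_subcover x :
  (forall A s, is_lub le A s -> le x s -> exists l, (forall y, In y l -> A y) /\
     forall u, (forall y, In y l -> le y u) -> le x u) ->
  compact le x.
Proof.
  intros Hcover A s Hs Hxs.
  destruct (Hcover A s Hs Hxs) as [l [Hl Hbelow]].
  exists l; split; [exact Hl |].
  intros s' Hs'; apply Hbelow, Hs'.
Qed.

Lemma compact_bottom b : (forall q, le b q) -> compact le b.
Proof.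
  intros Hb; apply compact_of_finite_subcover; intros A s _ _.
  exists nil; split; [intros y [] | intros; apply Hb].
Qed.

Hypothesis HC : is_complete_lattice le.

Lemma compact_finite_subcover x : compact le x ->
  forall A s, is_lub le A s -> le x s -> exists l, (forall y, In y l -> A y) /\
    forall u, (forall y, In y l -> le y u) -> le x u.
Proof.
  intros Hx A s Hs Hxs.
  destruct (Hx A s Hs Hxs) as [l [Hl Hbelow]].
  exists l; split; [exact Hl |].
  intros u Hu. destruct HC as [[_ [Htrans _]] Hlub].
  destruct (Hlub (fun y => In y l)) as [s' Hs'].
  apply Htrans with s'; [apply Hbelow, Hs' | apply (proj2 Hs'), Hu].
Qed.

Lemma compacts_below_finite_subjoin (l : list T) A t :
  (forall c, In c l -> compact le c /\ le c t) -> is_lub le A t ->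
  exists la, (forall y, In y la -> A y) /\
    forall u, (forall y, In y la -> le y u) -> forall c, In c l -> le c u.
Proof.
  intros Hl Ht. induction l as [|c l IH].
  - exists nil; split; [intros y [] | intros u _ c []].
  - destruct IH as [la [Hla Hla_below]]; [intros d Hd; apply Hl; right; exact Hd |].
    destruct (Hl c (or_introl eq_refl)) as [Hc Hct].
    destruct (compact_finite_subcover Hc Ht Hct) as [lc [Hlc Hlc_below]].
    exists (lc ++ la); split.
    + intros y Hy; apply in_app_or in Hy; destruct Hy; auto.
    + intros u Hu d [<- | Hd].
      * apply Hlc_below; intros y Hy; apply Hu, in_or_app; left; exact Hy.
      * apply Hla_below; [intros y Hy; apply Hu, in_or_app; right; exact Hy | exact Hd].
Qed.

Lemma compact_join_list (l : list T) s :
  (forall c, In c l -> compact le c) -> is_lub le (fun y => In y l) s -> compact le s.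
Proof.
  intros Hl Hs. apply compact_of_finite_subcover; intros A t Ht Hst.
  destruct HC as [[_ [Htrans _]] _].
  destruct (@compacts_below_finite_subjoin l A t) as [la [Hla Hla_below]]; [| exact Ht |].
  - intros c Hc; split; [auto |]. apply Htrans with s; [apply (proj1 Hs) |]; auto.
  - exists la; split; [exact Hla |].
    intros u Hu; apply (proj2 Hs); intros c Hc; apply Hla_below; auto.
Qed.

End Joins.

Lemma list_preimage T1 T2 (f : T1 -> T2) (A : T1 -> Prop) (l : list T2) :
  (forall y, In y l -> exists x, A x /\ y = f x) ->
  exists l', (forall x, In x l' -> A x) /\ map f l' = l.
Proof.
  induction l as [|y l IH]; intros Hl.
  - exists nil; split; [intros x [] | reflexivity].
  - destruct IH as [l' [Hl' Hmap]]; [intros z Hz; apply Hl; right; exact Hz |].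
    destruct (Hl y (or_introl eq_refl)) as [x [Hx ->]].
    exists (x :: l'); split; [intros z [<- | Hz]; auto | simpl; rewrite Hmap; reflexivity].
Qed.

Lemma list_witnesses A B (P : B -> Prop) (R : A -> B -> Prop) (l : list A) :
  (forall a, In a l -> exists b, P b /\ R a b) ->
  exists lb, (forall b, In b lb -> P b) /\ forall a, In a l -> exists b, In b lb /\ R a b.
Proof.
  induction l as [|a l IH]; intros Hl.
  - exists nil; split; [intros b [] | intros a []].
  - destruct IH as [lb [Hlb Hcover]]; [intros a' Ha'; apply Hl; right; exact Ha' |].
    destruct (Hl a (or_introl eq_refl)) as [b [Hb Hab]].
    exists (b :: lb); split; [intros b' [<- | Hb']; auto |].
    intros a' [<- | Ha']; [exists b; split; [left |]; auto |].
    destruct (Hcover a' Ha') as [b' [Hb' Ha'b']]; exists b'; split; [right |]; auto.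
Qed.

Section Morphisms.

Variables (T1 T2 : Type) (le1 : T1 -> T1 -> Prop) (le2 : T2 -> T2 -> Prop).

Lemma mor_monotone f : is_partial_order le1 -> is_mor le1 le2 f ->
  forall x y, le1 x y -> le2 (f x) (f y).
Proof.
  intros Hpo [Hjoin _] x y Hxy.
  apply (proj1 (Hjoin _ _ (lub_pair_le x y Hpo Hxy))); exists x; auto.
Qed.

Lemma mor_join2 f x y s : is_mor le1 le2 f ->
  is_lub le1 (fun a => a = x \/ a = y) s -> is_lub le2 (fun b => b = f x \/ b = f y) (f s).
Proof.
  intros [Hjoin _] Hs.
  apply lub_ext with (A := fun b => exists a, (a = x \/ a = y) /\ b = f a);
    [| exact (Hjoin _ _ Hs)].
  intros z; split; [intros [a [[-> | ->] ->]]; auto | intros [-> | ->]; eauto].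
Qed.

Hypotheses (HC1 : is_complete_lattice le1) (Hpo2 : is_partial_order le2).

Section NormalMono.

Variables (i : T1 -> T2) (Hi : is_normal_mono le1 le2 i).

Lemma normal_mono_reflect_le x y : le2 (i x) (i y) -> le1 x y.
Proof.
  intros Hxy. destruct Hi as [Hmor [Hinj _]].
  destruct (proj2 HC1 (fun a => a = x \/ a = y)) as [s Hs].
  assert (Hsy : s = y)
    by exact (Hinj _ _ (lub_unique Hpo2 (mor_join2 Hmor Hs) (lub_pair_le (i x) (i y) Hpo2 Hxy))).
  subst s; apply (proj1 Hs); auto.
Qed.

Lemma normal_mono_reflect_lub X s :
  is_lub le2 (fun y => exists x, X x /\ y = i x) (i s) -> is_lub le1 X s.
Proof.
  intros [Hub Hleast]; split.
  - intros a Ha; apply normal_mono_reflect_le, Hub; eauto.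
  - intros u Hu; apply normal_mono_reflect_le, Hleast; intros b [x [Hx ->]].
    apply (mor_monotone (proj1 HC1) (proj1 Hi)); auto.
Qed.

Lemma normal_mono_reflect_compact m : compact le2 (i m) -> compact le1 m.
Proof.
  intros Hm. destruct Hi as [Hmor _].
  apply compact_of_finite_subcover; intros A s Hs Hms.
  destruct (Hm _ _ (proj1 Hmor A s Hs) (mor_monotone (proj1 HC1) Hmor Hms)) as [l [Hl Hbelow]].
  destruct (list_preimage i A l Hl) as [l' [Hl' Hmap]]; subst l.
  exists l'; split; [exact Hl' |].
  intros u Hu. destruct (proj2 HC1 (fun x => In x l')) as [s' Hs'].
  apply (proj1 (proj2 (proj1 HC1))) with s'; [| apply (proj2 Hs'); exact Hu].
  apply normal_mono_reflect_le, Hbelow.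
  apply lub_ext with (A := fun y => exists x, In x l' /\ y = i x); [| exact (proj1 Hmor _ _ Hs')].
  intros y; rewrite in_map_iff; split; intros [x [? ?]]; eauto.
Qed.

Lemma normal_mono_factor P (a : P -> T2) :
  (forall p, exists m, le2 (a p) (i m)) -> exists u : P -> T1, forall p, i (u p) = a p.
Proof.
  intros Hbelow.
  assert (Hex : forall p, exists m, i m = a p)
    by (intros p; destruct (Hbelow p) as [m Hm]; exact (proj2 (proj2 Hi) m _ Hm)).
  exists (fun p => proj1_sig (constructive_indefinite_description _ (Hex p))).
  intros p; exact (proj2_sig (constructive_indefinite_description _ (Hex p))).
Qed.

Lemma normal_mono_factor_mor P (leP : P -> P -> Prop) (a : P -> T2) (u : P -> T1) :
  is_mor leP le2 a -> (forall p, i (u p) = a p) -> is_mor leP le1 u.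
Proof.
  intros [Ha_join Ha_compact] Hu; split.
  - intros A s Hs. apply normal_mono_reflect_lub. rewrite Hu.
    apply lub_ext with (A := fun y => exists x, A x /\ y = a x); [| exact (Ha_join _ _ Hs)].
    intros y; split.
    + intros [q [Hq ->]]; exists (u q); split; [eauto | symmetry; apply Hu].
    + intros [x [[q [Hq ->]] ->]]; exists q; split; [exact Hq | apply Hu].
  - intros p Hp. apply normal_mono_reflect_compact. rewrite Hu. apply Ha_compact, Hp.
Qed.

End NormalMono.

End Morphisms.

Section UpperSet.

Variables (T : Type) (le : T -> T -> Prop) (e : T).

Local Notation up := {x : T | le e x}.
Local Notation up_le := (sub_le le (fun x => le e x)).

(* Joins in the upper set are joins in T with [e] adjoined; this also covers
   the empty join, which is [e]. *)
Definition with_base (B : up -> Prop) : T -> Prop :=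
  fun y => y = e \/ exists b, B b /\ y = proj1_sig b.

Lemma upper_lub_iff B s : is_lub up_le B s <-> is_lub le (with_base B) (proj1_sig s).
Proof.
  split; intros [Hub Hleast]; split.
  - intros y [-> | [b [Hb ->]]]; [exact (proj2_sig s) | apply Hub, Hb].
  - intros u Hu. assert (He : le e u) by (apply Hu; left; reflexivity).
    apply (Hleast (exist _ u He)); intros b Hb; apply Hu; right; eauto.
  - intros b Hb; apply Hub; right; eauto.
  - intros u Hu; apply Hleast.
    intros y [-> | [b [Hb ->]]]; [exact (proj2_sig u) | apply Hu, Hb].
Qed.

Lemma with_base_list B (l : list T) :
  (forall z, In z l -> with_base B z) ->
  exists lb, (forall b, In b lb -> B b) /\
    (forall z, In z l -> z = e \/ exists b, In b lb /\ z = proj1_sig b).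
Proof.
  induction l as [|z l IH]; intros Hl.
  - exists nil; split; [intros b [] | intros z []].
  - destruct IH as [lb [Hlb Hcover]]; [intros y Hy; apply Hl; right; exact Hy |].
    destruct (Hl z (or_introl eq_refl)) as [-> | [b [Hb ->]]].
    + exists lb; split; [exact Hlb | intros y [<- | Hy]; auto].
    + exists (b :: lb); split; [intros b' [<- | Hb']; auto |].
      intros y [<- | Hy]; [right; exists b; split; [left |]; auto |].
      destruct (Hcover y Hy) as [-> | [b' [Hb' ->]]]; [left; reflexivity |].
      right; exists b'; split; [right |]; auto.
Qed.

Hypothesis HC : is_complete_lattice le.

Lemma upper_complete : is_complete_lattice up_le.
Proof.
  destruct HC as [[Hrefl [Htrans Hanti]] Hlub]. split; [split; [| split] |].
  - intros x; apply Hrefl.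
  - intros x y z; apply Htrans.
  - intros x y Hxy Hyx; apply sig_eq, Hanti; assumption.
  - intros B. destruct (Hlub (with_base B)) as [t Ht].
    assert (He : le e t) by (apply (proj1 Ht); left; reflexivity).
    exists (exist _ t He); apply upper_lub_iff, Ht.
Qed.

Lemma upper_compact_of_base_join (y : up) (l : list T) :
  (forall c, In c l -> compact le c) ->
  is_lub le (fun z => z = e \/ In z l) (proj1_sig y) -> compact up_le y.
Proof.
  intros Hl Hy. apply compact_of_finite_subcover; intros B s Hs Hys.
  apply upper_lub_iff in Hs.
  destruct HC as [[_ [Htrans _]] _].
  destruct (@compacts_below_finite_subjoin _ le HC l (with_base B) (proj1_sig s))
    as [lz [Hlz Hlz_below]]; [| exact Hs |].
  { intros c Hc; split; [auto |]. apply Htrans with (proj1_sig y); [apply (proj1 Hy) |]; auto. }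
  destruct (with_base_list lz Hlz) as [lb [Hlb Hcover]].
  exists lb; split; [exact Hlb |]. intros u Hu.
  apply (proj2 Hy). intros z [-> | Hz]; [exact (proj2_sig u) |].
  apply (Hlz_below _); [| exact Hz].
  intros w Hw. destruct (Hcover w Hw) as [-> | [b [Hb ->]]]; [exact (proj2_sig u) | apply Hu, Hb].
Qed.

Lemma upper_compact_join2 (y : up) c : compact le c ->
  is_lub le (fun a => a = c \/ a = e) (proj1_sig y) -> compact up_le y.
Proof.
  intros Hc Hy. apply upper_compact_of_base_join with (c :: nil).
  - intros c' [<- | []]; exact Hc.
  - apply lub_ext with (A := fun a => a = c \/ a = e); [| exact Hy].
    intros a; simpl; split; intros [H | H]; auto; destruct H as [H | []]; auto.
Qed.

(* The slack [K] <= [K'] lets a generating family of [y] be enlarged to all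
   compact elements below [y]. *)
Lemma upper_lub_join_base (y : up) (K K' : T -> Prop) :
  is_lub le K (proj1_sig y) -> (forall c, K c -> K' c) ->
  (forall c, K' c -> le c (proj1_sig y)) ->
  is_lub up_le (fun z => exists c, K' c /\ is_lub le (fun a => a = c \/ a = e) (proj1_sig z)) y.
Proof.
  intros HK HKK' HK'y. destruct HC as [[Hrefl [Htrans _]] Hlub].
  apply upper_lub_iff; split.
  - intros w [-> | [b [[c [Hc Hb]] ->]]]; [exact (proj2_sig y) |].
    apply (proj2 Hb); intros a [-> | ->]; [auto | exact (proj2_sig y)].
  - intros u Hu. apply (proj2 HK); intros c Hc.
    destruct (Hlub (fun a => a = c \/ a = e)) as [w Hw].
    assert (Hew : le e w) by (apply (proj1 Hw); right; reflexivity).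
    apply Htrans with w; [apply (proj1 Hw); left; reflexivity |].
    apply Hu; right; exists (exist _ w Hew); split; [exists c; split; auto | reflexivity].
Qed.

End UpperSet.

Section AlgebraicUpperSet.

Variables (T : Type) (le : T -> T -> Prop) (e : T).
Hypothesis HA : is_algebraic_lattice le.

Local Notation up := {x : T | le e x}.
Local Notation up_le := (sub_le le (fun x => le e x)).

Lemma upper_compact_base_join (y : up) : compact up_le y ->
  exists l, (forall c, In c l -> compact le c) /\
    is_lub le (fun z => z = e \/ In z l) (proj1_sig y).
Proof.
  intros Hy. destruct HA as [HC Halg]. destruct (Halg (proj1_sig y)) as [K [HKc HK]].
  assert (Hcover := upper_lub_join_base e HC y K HK (fun c h => h) (fun c h => proj1 HK c h)).
  assert (HCup := upper_complete e HC).
  destruct (compact_finite_subcover HCup Hy Hcover (proj1 (proj1 HCup) y)) as [lb [Hlb Hbelow]].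
  edestruct list_witnesses as [l [Hl Hl_cover]]; [exact Hlb |].
  exists l; split; [intros c Hc; apply HKc, Hl, Hc |]. split.
  - intros z [-> | Hz]; [exact (proj2_sig y) | apply (proj1 HK), Hl, Hz].
  - intros u Hu. assert (He : le e u) by (apply Hu; left; reflexivity).
    apply (Hbelow (exist _ u He)); intros b Hb.
    destruct (Hl_cover b Hb) as [c [Hc Hbc]].
    apply (proj2 Hbc); intros a [-> | ->]; [apply Hu; right; exact Hc | exact He].
Qed.

Lemma upper_algebraic : is_algebraic_lattice up_le.
Proof.
  destruct HA as [HC Halg]. split; [apply upper_complete, HC |].
  intros y. destruct (Halg (proj1_sig y)) as [K [HKc HK]].
  eexists; split;
    [| apply (upper_lub_join_base e HC y (fun c => compact le c /\ le c (proj1_sig y)) HK)].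
  - intros z [c [[Hc _] Hz]]; exact (upper_compact_join2 HC z Hc Hz).
  - intros c Hc; split; [apply HKc, Hc | apply (proj1 HK), Hc].
  - intros c [_ Hc]; exact Hc.
Qed.

Lemma upper_restrict_mor Q (leQ : Q -> Q -> Prop) (g : T -> Q) :
  is_complete_lattice leQ -> is_mor le leQ g -> (forall q, leQ (g e) q) ->
  is_mor up_le leQ (fun y => g (proj1_sig y)).
Proof.
  intros HQ [Hg_join Hg_compact] Hbot. split.
  - intros B s Hs.
    destruct (Hg_join _ _ (proj1 (upper_lub_iff le e B s) Hs)) as [Hub Hleast]. split.
    + intros q [y [Hy ->]]; apply Hub; exists (proj1_sig y); split; [right; eauto | reflexivity].
    + intros w Hw; apply Hleast.
      intros q [x [[-> | [b [Hb ->]]] ->]]; [apply Hbot | apply Hw; eauto].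
  - intros y Hy. destruct (upper_compact_base_join Hy) as [l [Hl Hlub]].
    apply (compact_join_list HQ (g e :: map g l)).
    + intros c [<- | Hc]; [apply compact_bottom, Hbot |].
      apply in_map_iff in Hc; destruct Hc as [m [<- Hm]]; apply Hg_compact, Hl, Hm.
    + apply lub_ext with (A := fun q => exists x, (x = e \/ In x l) /\ q = g x);
        [| exact (Hg_join _ _ Hlub)].
      intros q; simpl; rewrite in_map_iff; split.
      * intros [m [[-> | Hm] ->]]; [left | right]; eauto.
      * intros [<- | [m [<- Hm]]]; eauto.
Qed.

End AlgebraicUpperSet.

Section JoinMap.

Variables (T : Type) (le : T -> T -> Prop) (e : T) (p : T -> {x : T | le e x}).
Hypothesis HC : is_complete_lattice le.
Hypothesis Hp : forall x, is_lub le (fun a => a = x \/ a = e) (proj1_sig (p x)).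

Local Notation up_le := (sub_le le (fun x => le e x)).

Lemma join_map_retract z : p (proj1_sig z) = z.
Proof.
  apply sig_eq, (lub_unique (proj1 HC) (Hp _)), lub_of_greatest; [left; reflexivity |].
  intros a [-> | ->]; [apply (proj1 HC) | exact (proj2_sig z)].
Qed.

Lemma join_map_id x : le e x -> proj1_sig (p x) = x.
Proof. intros Hx; exact (f_equal (@proj1_sig _ _) (join_map_retract (exist _ x Hx))). Qed.

Lemma join_map_mor : is_mor le up_le p.
Proof.
  destruct (proj1 HC) as [_ [Htrans _]]. split.
  - intros A s Hs. apply upper_lub_iff; split.
    + intros y [-> | [b [[a [Ha ->]] ->]]]; [apply (proj1 (Hp s)); right; reflexivity |].
      apply (proj2 (Hp a)); intros w [-> | ->]; [| apply (proj1 (Hp s)); right; reflexivity].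
      apply Htrans with s; [apply (proj1 Hs), Ha | apply (proj1 (Hp s)); left; reflexivity].
    + intros u Hu. apply (proj2 (Hp s)); intros w [-> | ->]; [| apply Hu; left; reflexivity].
      apply (proj2 Hs); intros a Ha.
      apply Htrans with (proj1_sig (p a)); [apply (proj1 (Hp a)); left; reflexivity |].
      apply Hu; right; exists (p a); split; [exists a; split |]; auto.
  - intros x Hx. exact (upper_compact_join2 HC (p x) Hx (Hp x)).
Qed.

Lemma join_map_normal_epi : is_normal_epi le up_le p.
Proof.
  split; [exact join_map_mor |]. exists e, p. split; [| split].
  - intros y y' Hy Hy'. unfold sub_le. rewrite (join_map_id Hy), (join_map_id Hy'). tauto.
  - intros z; exists (proj1_sig z); split; [exact (proj2_sig z) | apply join_map_retract].
  - intros y j Hj. assert (Hej : le e j) by (apply (proj1 Hj); right; reflexivity).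
    apply sig_eq. rewrite (join_map_id Hej).
    exact (lub_unique (proj1 HC) (Hp y) Hj).
Qed.

End JoinMap.

Section Square.

Variables (M N : Type) (leM : M -> M -> Prop) (leN : N -> N -> Prop).
Hypotheses (HM : is_algebraic_lattice leM) (HN : is_algebraic_lattice leN).
Variables (i : M -> N) (e : M).
Hypothesis Hi : is_normal_mono leM leN i.
Variables (pi : M -> {x : M | leM e x}) (pi' : N -> {y : N | leN (i e) y}).
Hypothesis Hpi : forall x, is_lub leM (fun a => a = x \/ a = e) (proj1_sig (pi x)).
Hypothesis Hpi' : forall y, is_lub leN (fun b => b = y \/ b = i e) (proj1_sig (pi' y)).
Variable i' : {x : M | leM e x} -> {y : N | leN (i e) y}.
Hypothesis Hi' : forall x, proj1_sig (i' x) = i (proj1_sig x).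

Local Notation upM := (sub_le leM (fun x => leM e x)).
Local Notation upN := (sub_le leN (fun y => leN (i e) y)).

Let HpoN := proj1 (proj1 HN).

Lemma square_commutes x : pi' (i x) = i' (pi x).
Proof.
  apply sig_eq. rewrite Hi'.
  exact (lub_unique HpoN (Hpi' (i x)) (mor_join2 (proj1 Hi) (Hpi x))).
Qed.

Lemma upper_normal_mono : is_normal_mono upM upN i'.
Proof.
  destruct Hi as [[Hi_join Hi_compact] [Hinj Hdown]].
  split; [split | split].
  - intros B s Hs. apply upper_lub_iff. rewrite Hi'.
    apply lub_ext with (A := fun y => exists x, with_base leM e B x /\ y = i x);
      [| exact (Hi_join _ _ (proj1 (upper_lub_iff leM e B s) Hs))].
    intros y; split.
    + intros [x [[-> | [b [Hb ->]]] ->]]; [left; reflexivity | right].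
      exists (i' b); split; [exists b; split; [exact Hb | reflexivity] | symmetry; apply Hi'].
    + intros [-> | [b' [[b [Hb ->]] ->]]]; [exists e; split; [left |]; reflexivity |].
      exists (proj1_sig b); split; [right; eauto | apply Hi'].
  - intros x Hx. destruct (upper_compact_base_join e HM Hx) as [l [Hl Hlub]].
    apply (upper_compact_of_base_join (proj1 HN) (i' x) (map i l)).
    + intros c Hc; apply in_map_iff in Hc; destruct Hc as [m [<- Hm]]; apply Hi_compact, Hl, Hm.
    + rewrite Hi'.
      apply lub_ext with (A := fun y => exists x, (x = e \/ In x l) /\ y = i x);
        [| exact (Hi_join _ _ Hlub)].
      intros y; rewrite in_map_iff; split.
      * intros [m [[-> | Hm] ->]]; [left | right]; eauto.
      * intros [-> | [m [<- Hm]]]; eauto.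
  - intros x y Hxy. apply sig_eq, Hinj. rewrite <- !Hi'. rewrite Hxy. reflexivity.
  - intros x y Hy. unfold sub_le in Hy. rewrite Hi' in Hy.
    destruct (Hdown _ _ Hy) as [z Hz].
    assert (Hez : leM e z)
      by (apply (normal_mono_reflect_le (proj1 HM) HpoN Hi); rewrite Hz; exact (proj2_sig y)).
    exists (exist _ z Hez). apply sig_eq. rewrite Hi'. exact Hz.
Qed.

Lemma square_pullback : is_pullback leM leN upM upN i pi pi' i'.
Proof.
  split; [exact square_commutes |]. intros P leP _ a b Ha _ Hab.
  (* [a p] lies below [pi' (a p) = i' (b p)], which is in the image of [i]. *)
  destruct (normal_mono_factor Hi a) as [u Hu].
  { intros p. exists (proj1_sig (b p)). rewrite <- Hi', <- Hab.
    apply (proj1 (Hpi' (a p))); left; reflexivity. }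
  exists u. split; [| split; [exact Hu | split]].
  - exact (normal_mono_factor_mor (proj1 HM) HpoN Hi u Ha Hu).
  - intros p. apply sig_eq, (proj1 (proj2 Hi)).
    rewrite <- !Hi', <- Hab, <- square_commutes, Hu. reflexivity.
  - intros v _ Hva _ p. apply (proj1 (proj2 Hi)). rewrite Hva, Hu. reflexivity.
Qed.

Lemma square_pushout : is_pushout leM leN upM upN i pi pi' i'.
Proof.
  split; [exact square_commutes |]. intros Q leQ HQ g h Hg Hh Hgh.
  assert (HpoQ := proj1 (proj1 HQ)).
  (* [g (i e) = h (pi e)] is the image of the bottom of the upper set, an empty join. *)
  assert (Hbot : forall q, leQ (g (i e)) q).
  { rewrite Hgh.
    assert (Hempty : is_lub upM (fun _ => False) (pi e)).
    { split; [intros _ [] | intros w _]. unfold sub_le.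
      rewrite (join_map_id pi (proj1 HM) Hpi e (proj1 (proj1 (proj1 HM)) e)). exact (proj2_sig w). }
    intros q. apply (proj2 (proj1 Hh _ _ Hempty)). intros y [x [[] _]]. }
  exists (fun y => g (proj1_sig y)). split; [| split; [| split]].
  - exact (upper_restrict_mor (i e) HN (proj1 HQ) Hg Hbot).
  - intros y. apply (lub_unique HpoQ (mor_join2 Hg (Hpi' y))), lub_of_greatest;
      [left; reflexivity | intros q [-> | ->]; [apply HpoQ | apply Hbot]].
  - intros c. simpl. rewrite Hi', Hgh, (join_map_retract pi (proj1 HM) Hpi). reflexivity.
  - intros v _ Hvg _ d. rewrite <- Hvg, (join_map_retract pi' (proj1 HN) Hpi'). reflexivity.
Qed.

End Square.

Theorem mainTheorem18
  (M N : Type) (leM : M -> M -> Prop) (leN : N -> N -> Prop)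
  (HM : is_algebraic_lattice leM) (HN : is_algebraic_lattice leN)
  (i : M -> N) (Hi : is_normal_mono leM leN i)
  (L : M -> Prop) (HL : is_alg_sublattice leM L)
  (oneL : M) (HoneL : L oneL /\ forall x, L x -> leM x oneL)
  (pi : M -> {x : M | leM oneL x})
  (Hpi : forall x, is_lub leM (fun a => a = x \/ a = oneL) (proj1_sig (pi x)))
  (pi' : N -> {y : N | leN (i oneL) y})
  (Hpi' : forall y, is_lub leN (fun b => b = y \/ b = i oneL) (proj1_sig (pi' y)))
  (i' : {x : M | leM oneL x} -> {y : N | leN (i oneL) y})
  (Hi' : forall x, proj1_sig (i' x) = i (proj1_sig x)) :
  is_algebraic_lattice (sub_le leM (fun x => leM oneL x)) /\
  is_algebraic_lattice (sub_le leN (fun y => leN (i oneL) y)) /\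
  is_normal_epi leM (sub_le leM (fun x => leM oneL x)) pi /\
  is_normal_epi leN (sub_le leN (fun y => leN (i oneL) y)) pi' /\
  is_normal_mono (sub_le leM (fun x => leM oneL x)) (sub_le leN (fun y => leN (i oneL) y)) i' /\
  is_pullback leM leN (sub_le leM (fun x => leM oneL x)) (sub_le leN (fun y => leN (i oneL) y))
    i pi pi' i' /\
  is_pushout leM leN (sub_le leM (fun x => leM oneL x)) (sub_le leN (fun y => leN (i oneL) y))
    i pi pi' i'.
Proof.
  split; [apply upper_algebraic, HM |].
  split; [apply upper_algebraic, HN |].
  split; [apply join_map_normal_epi; [exact (proj1 HM) | exact Hpi] |].
  split; [apply join_map_normal_epi; [exact (proj1 HN) | exact Hpi'] |].
  split; [apply upper_normal_mono; assumption |].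
  split; [apply square_pullback | apply square_pushout]; assumption.
Qed.
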